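(* If $k$ is even, then every matching of $X_{2k}$ has at least one disjoint compatible matching; i.e. $\mathbf{DCM}_k$ has no isolated vertices.
   Context: Let $k\ge 1$ and let $X_{2k}=\{P_1,\dots,P_{2k}\}$ be $2k$ points in convex position in the plane, labeled in clockwise cyclic order. A matching of $X_{2k}$ means a set of $k$ pairwise non-crossing straight segments (edges) with endpoints in $X_{2k}$ covering every point exactly once; its size is $k$. Two matchings $M,M'$ of $X_{2k}$ are disjoint compatible if they have no common edge and no edge of $M$ crosses an edge of $M'$. $\mathbf{DCM}_k$ is the graph whose vertices are the matchings of $X_{2k}$, two being adjacent iff they are disjoint compatible. *)

From mathcomp Require Import all_boot.
Set Implicit Arguments. Unset Strict Implicit. Unset Printing Implicit Defensive.

(* The points P_1,...,P_{2k} in clockwise order are modelled by 'I_(2k)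
   (P_{i+1} <-> i).  An edge (straight segment) is a set of points;
   a matching is a set of edges. *)
Definition point (k : nat) := 'I_(2 * k).
Definition edge (k : nat) := {set point k}.
Definition matching_set (k : nat) := {set edge k}.

(* For points in convex position, the open segments P_aP_b and P_cP_d
   (a<b, c<d) cross iff their endpoints interleave along the cyclic
   order: a < c < b < d or c < a < d < b. *)
Definition cross_ord (k : nat) (e f : edge k) : bool :=
  [exists a : point k, exists b : point k, exists c : point k, exists d : point k,
     [&& e == [set a; b], f == [set c; d], a < c, c < b & b < d]].

Definition cross (k : nat) (e f : edge k) : bool := cross_ord e f || cross_ord f e.

Definition is_matching (k : nat) (M : matching_set k) : bool :=
  [&& [forall e in M, #|e| == 2],
      [forall x : point k, #|[set e in M | x \in e]| == 1]
    & [forall e in M, forall f in M, ~~ cross e f]].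

Definition disj_compat (k : nat) (M M' : matching_set k) : bool :=
  [disjoint M & M'] && [forall e in M, forall f in M', ~~ cross e f].

Definition DCM_adj (k : nat) (M M' : matching_set k) : bool :=
  [&& is_matching M, is_matching M' & disj_compat M M'].

From mathcomp Require Import all_boot zify.
Set Implicit Arguments. Unset Strict Implicit. Unset Printing Implicit Defensive.

(* Call four points a < b < c < d of S a block of a non-crossing perfect matching M
   of S if no other point of S lies between a and d and M pairs them either as
   {ab, cd} or as {ad, bc}.  Every such matching of at least four points has a block:
   take the leftmost point x and its partner y, and look for a block between x and y,
   or, if there is no point there, to the right of y.  The two pairings of a block
   are disjoint compatible, and since a block is an interval of S, exchanging them
   and recursing on the remaining points yields a disjoint compatible matching.
   This needs |S| divisible by 4, which holds for S = X_{2k} when k is even. *)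

Section Crossing.
Variable k : nat.
Implicit Types (a b c d : point k) (e f : edge k).

Lemma set2_ltn_inj a b c d :
  [set a; b] = [set c; d] -> a < b -> c < d -> a = c :> nat /\ b = d :> nat.
Proof.
move=> eq_ab_cd ltab ltcd.
have /set2P a_cd : a \in [set c; d] by rewrite -eq_ab_cd set21.
have /set2P b_cd : b \in [set c; d] by rewrite -eq_ab_cd set22.
by case: a_cd b_cd => eq_a [] eq_b; subst a b; lia.
Qed.

Lemma cards2_ltn a b : a < b -> #|[set a; b]| = 2.
Proof. by move=> ltab; rewrite cards2 -val_eqE neq_ltn ltab. Qed.

Lemma cross_ord_set2 a b c d : a < b -> c < d ->
  cross_ord [set a; b] [set c; d] = [&& a < c, c < b & b < d].
Proof.
move=> ltab ltcd; apply/idP/idP.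
  case/existsP=> a' /existsP[b' /existsP[c' /existsP[d' /and5P[/eqP e_ab /eqP e_cd h1 h2 h3]]]].
  have [-> ->] := set2_ltn_inj e_ab ltab (ltn_trans h1 h2).
  by have [-> ->] := set2_ltn_inj e_cd ltcd (ltn_trans h2 h3); rewrite h1 h2 h3.
case/and3P=> h1 h2 h3; apply/existsP; exists a; apply/existsP; exists b.
by apply/existsP; exists c; apply/existsP; exists d; rewrite !eqxx h1 h2 h3.
Qed.

Lemma cross_set2 a b c d : a < b -> c < d ->
  cross [set a; b] [set c; d] = [&& a < c, c < b & b < d] || [&& c < a, a < d & d < b].
Proof. by move=> ltab ltcd; rewrite /cross !cross_ord_set2. Qed.

Lemma cross_set2_in_out a b c d :
  a < b -> a < c < b -> ~~ (a <= d <= b) -> cross [set a; b] [set c; d].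
Proof.
move=> ltab /andP[ltac ltcb]; rewrite negb_and -!ltnNge => /orP[ltda|ltbd].
  by rewrite [[set c; d]]setUC cross_set2 //; lia.
by rewrite cross_set2 //; lia.
Qed.

Lemma crossC e f : cross e f = cross f e.
Proof. by rewrite /cross orbC. Qed.

Lemma edge_set2 e : #|e| = 2 -> exists a b, a < b /\ e = [set a; b].
Proof.
move/eqP/cards2P=> [a [b [neq_ab ->]]].
case: (ltngtP a b) => [ltab|ltba|/val_inj eq_ab]; last by rewrite eq_ab eqxx in neq_ab.
  by exists a, b.
by exists b, a; rewrite setUC.
Qed.

Lemma cross_irr e : #|e| = 2 -> ~~ cross e e.
Proof. by case/edge_set2=> a [b [ltab ->]]; rewrite cross_set2 //; lia. Qed.

Lemma cross_straddle e f : cross e f ->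
  exists u v w, [/\ u \in e, v \in e, w \in f & u < w < v].
Proof.
case/orP=> /existsP[a /existsP[b /existsP[c /existsP[d /and5P[/eqP-> /eqP-> h1 h2 h3]]]]].
  by exists a, b, c; rewrite !inE !eqxx ?orbT h1 h2.
by exists c, d, b; rewrite !inE !eqxx ?orbT h2 h3.
Qed.

Lemma noncross_separated e f (lo hi : nat) :
  {in e, forall x : point k, lo <= x <= hi} -> {in f, forall x : point k, ~~ (lo <= x <= hi)} ->
  ~~ cross e f.
Proof.
move=> he hf; apply/negP=> /cross_straddle[u [v [w [ue ve wf /andP[uw wv]]]]].
by move: (he _ ue) (he _ ve) (hf _ wf); lia.
Qed.

Lemma disj_compatC (M N : matching_set k) : disj_compat M N = disj_compat N M.
Proof.
rewrite /disj_compat disjoint_sym; congr andb.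
by apply/forall_inP/forall_inP=> nc e eM; apply/forall_inP=> f fM;
  rewrite crossC; move/forall_inP: (nc f fM); apply.
Qed.

Lemma disj_compat0 (M : matching_set k) : disj_compat M set0.
Proof.
apply/andP; split; first by apply/pred0P=> e /=; rewrite inE andbF.
by apply/forall_inP=> e _; apply/forall_inP=> f; rewrite inE.
Qed.

End Crossing.

Section Matchings.
Variable k : nat.
Implicit Types (S Q : {set point k}) (M N E : matching_set k) (e f : edge k) (x y z : point k).

Definition deg M x := #|[set e in M | x \in e]|.

Definition matching_on S M : Prop :=
  [/\ {in M, forall e, #|e| = 2}, forall x, deg M x = (x \in S)
    & {in M &, forall e f, ~~ cross e f}].

Lemma is_matchingP M : reflect (matching_on [set: point k] M) (is_matching M).
Proof.
apply: (iffP and3P) => [[/forall_inP h2 /forallP hdeg /forall_inP hnc]|[h2 hdeg hnc]].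
  split=> [e /h2/eqP //|x|e f /hnc/forall_inP hnce /hnce //].
  by rewrite inE; apply/eqP/hdeg.
split; first by apply/forall_inP=> e /h2->.
  by apply/forallP=> x; rewrite -/(deg M x) hdeg inE.
by apply/forall_inP=> e eM; apply/forall_inP=> f fM; apply: hnc.
Qed.

Lemma degU M N x : [disjoint M & N] -> deg (M :|: N) x = deg M x + deg N x.
Proof.
move=> dis_MN; rewrite /deg.
have -> : [set e in M :|: N | x \in e] = [set e in M | x \in e] :|: [set e in N | x \in e].
  by apply/setP=> e; rewrite !inE andb_orl.
rewrite cardsU disjoint_setI0 ?cards0 ?subn0 //.
by apply: disjointW dis_MN; apply/subsetP=> e; rewrite inE => /andP[].
Qed.

Lemma deg1 e x : deg [set e] x = (x \in e).
Proof.
rewrite /deg; case: (boolP (x \in e)) => xe.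
  by apply: etrans (cards1 e); apply: eq_card => f; rewrite !inE; case: eqP => // ->.
apply: etrans (cards0 (edge k)); apply: eq_card => f; rewrite !inE.
by case: eqP => // ->; apply/negbTE.
Qed.

Lemma deg_set2 e f x : e != f -> deg [set e; f] x = (x \in e) + (x \in f).
Proof. by move=> nef; rewrite degU ?deg1 // disjoints1 inE. Qed.

Lemma matching_on0 : matching_on set0 set0.
Proof.
split=> [e|x|e]; rewrite ?inE //.
by apply: etrans (cards0 (edge k)); apply: eq_card => e; rewrite !inE.
Qed.

Section MatchingOn.
Variables (S : {set point k}) (M : matching_set k).
Hypothesis hM : matching_on S M.

Lemma matching_on_sub e : e \in M -> e \subset S.
Proof.
case: hM => _ hdeg _ eM; apply/subsetP=> x xe.
have : 0 < deg M x by rewrite card_gt0; apply/set0Pn; exists e; rewrite inE eM xe.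
by rewrite hdeg; case: (x \in S).
Qed.

Lemma matching_on_partner x : x \in S -> exists y, x != y /\ [set x; y] \in M.
Proof.
case: hM => h2 hdeg _ xS; have /cards1P[e dege] : deg M x == 1 by rewrite hdeg xS.
have /setIdP[eM xe] : e \in [set e in M | x \in e] by rewrite dege set11.
have [u [v [neq_uv def_e]]] := cards2P _ (introT eqP (h2 e eM)).
move: xe eM; rewrite def_e => /set2P[] eq_x eM; subst x; first by exists v.
by exists u; rewrite eq_sym setUC.
Qed.

Lemma matching_on_partner_uniq x y z : [set x; y] \in M -> [set x; z] \in M -> y = z.
Proof.
case: hM => h2 hdeg _ xyM xzM.
have : deg M x <= 1 by rewrite hdeg; case: (x \in S).
move/card_le1_eqP/(_ [set x; y] [set x; z]).
rewrite !inE xyM xzM !eqxx => /(_ isT isT) eq_xy_xz.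
have /set2P[eq_yx|//] : y \in [set x; z] by rewrite eq_xy_xz set22.
by move: (h2 _ xyM); rewrite eq_yx setUid cards1.
Qed.

Lemma matching_on_mate x y p q :
  [set x; y] \in M -> [set p; q] \in M -> q = x :> nat -> p = y :> nat.
Proof.
move=> xyM pqM /val_inj eq_qx; subst q; rewrite setUC in pqM.
by rewrite (matching_on_partner_uniq xyM pqM).
Qed.

End MatchingOn.

Lemma matching_on_subset S Q M E :
  matching_on S M -> matching_on Q E -> E \subset M -> Q \subset S.
Proof.
move=> hM hE sEM; apply/subsetP=> x xQ.
have [y [_ xyE]] := matching_on_partner hE xQ.
by move/subsetP: (matching_on_sub hM (subsetP sEM _ xyE)); apply; rewrite set21.
Qed.

Lemma matching_onD S Q M E :
  matching_on S M -> matching_on Q E -> E \subset M -> matching_on (S :\: Q) (M :\: E).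
Proof.
move=> [h2 hdeg hnc] [_ hdegE _] sEM.
have dis : [disjoint E & M :\: E] by rewrite -setI_eq0 setIDA setDIl setDv set0I.
split=> [e /setDP[eM _]|x|e f /setDP[eM _] /setDP[fM _]]; [exact: h2| |exact: hnc].
have := degU x dis; rewrite -{1}(setIidPr sEM) setID hdeg hdegE !inE.
by case: (x \in Q); case: (x \in S) => /= ?; lia.
Qed.

Lemma matching_on_set2 e f : #|e| = 2 -> #|f| = 2 -> [disjoint e & f] -> ~~ cross e f ->
  matching_on (e :|: f) [set e; f].
Proof.
move=> ce cf dis_ef ncef.
have nef : e != f.
  by apply: contraTneq dis_ef => <-; rewrite -setI_eq0 setIid -cards_eq0 ce.
split=> [g /set2P[]->//|x|g h /set2P[]-> /set2P[]->].
- by rewrite deg_set2 // inE; case xe: (x \in e) => //=; rewrite (disjointFr dis_ef xe).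
- exact: cross_irr.
- exact: ncef.
- by rewrite crossC.
- exact: cross_irr.
Qed.

Section Glue.
Variables (Q R : {set point k}) (lo hi : nat).
Hypothesis inQ : {in Q, forall x : point k, lo <= x <= hi}.
Hypothesis outR : {in R, forall x : point k, ~~ (lo <= x <= hi)}.

Lemma glue_disjoint_points : [disjoint Q & R].
Proof. by apply/pred0P=> x /=; apply/negP=> /andP[/inQ hx /outR]; rewrite hx. Qed.

Lemma glue_noncross e f : e \subset Q -> f \subset R -> ~~ cross e f.
Proof.
move=> /subsetP sQ /subsetP sR.
by apply: (noncross_separated (lo := lo) (hi := hi)) => [x /sQ/inQ | x /sR/outR].
Qed.

Lemma glue_disjoint M N : matching_on Q M -> matching_on R N -> [disjoint M & N].
Proof.
move=> hM hN; apply/pred0P=> e /=; apply/negP=> /andP[eM eN].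
have /card_gt0P[x xe] : 0 < #|e| by case: hM => -> .
have /subsetP/(_ x xe) xQ := matching_on_sub hM eM.
have /subsetP/(_ x xe) xR := matching_on_sub hN eN.
by rewrite (disjointFr glue_disjoint_points xQ) in xR.
Qed.

Lemma matching_on_glue M N :
  matching_on Q M -> matching_on R N -> matching_on (Q :|: R) (M :|: N).
Proof.
move=> hM hN; have [h2M degM ncM] := hM; have [h2N degN ncN] := hN.
split=> [e /setUP[]|x|e f /setUP[] eM /setUP[] fM];
  [exact: h2M|exact: h2N| |exact: ncM| | |exact: ncN].
- rewrite degU ?glue_disjoint // degM degN inE; case xQ: (x \in Q) => //=.
  by rewrite (disjointFr glue_disjoint_points xQ).
- exact: glue_noncross (matching_on_sub hM eM) (matching_on_sub hN fM).
- by rewrite crossC; exact: glue_noncross (matching_on_sub hM fM) (matching_on_sub hN eM).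
Qed.

Lemma disj_compat_glue M M' N N' :
  matching_on Q M -> matching_on Q M' -> matching_on R N -> matching_on R N' ->
  disj_compat M M' -> disj_compat N N' -> disj_compat (M :|: N) (M' :|: N').
Proof.
move=> hM hM' hN hN' /andP[dMM' ncMM'] /andP[dNN' ncNN']; apply/andP; split.
  rewrite -setI_eq0 setIUl !setIUr (disjoint_setI0 dMM') (disjoint_setI0 dNN').
  rewrite (disjoint_setI0 (glue_disjoint hM hN')) setIC.
  by rewrite (disjoint_setI0 (glue_disjoint hM' hN)) !setU0.
apply/forall_inP=> e /setUP[] eM; apply/forall_inP=> f /setUP[] fM.
- by move/forall_inP/(_ e eM)/forall_inP: ncMM'; apply.
- exact: glue_noncross (matching_on_sub hM eM) (matching_on_sub hN' fM).
- by rewrite crossC; exact: glue_noncross (matching_on_sub hM' fM) (matching_on_sub hN eM).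
- by move/forall_inP/(_ e eM)/forall_inP: ncNN'; apply.
Qed.

End Glue.

End Matchings.

Section Quad.
Variable k : nat.

Definition quad (a b c d : point k) : {set point k} := [set a; b] :|: [set c; d].

Lemma disjoint_set2_ltn (x y u v : point k) :
  (x : nat) != u -> (x : nat) != v -> (y : nat) != u -> (y : nat) != v ->
  [disjoint [set x; y] & [set u; v]].
Proof.
move=> xu xv yu yv; apply/pred0P=> z /=.
by apply/negP=> /andP[/set2P[] eq_zx /set2P[] eq_zu]; subst; rewrite eqxx in xu xv yu yv.
Qed.

Variables a b c d : point k.
Hypotheses (ltab : a < b) (ltbc : b < c) (ltcd : c < d).

Lemma card_quad : #|quad a b c d| = 4.
Proof.
by rewrite cardsU disjoint_setI0 ?disjoint_set2_ltn ?cards0 ?cards2_ltn //; lia.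
Qed.

Lemma quad_nested : [set a; d] :|: [set b; c] = quad a b c d.
Proof.
by apply/setP=> x; rewrite !inE; case: (x == a) (x == b) (x == c) (x == d) => [] [] [] [].
Qed.

Lemma matching_on_quad_adjacent : matching_on (quad a b c d) [set [set a; b]; [set c; d]].
Proof.
by apply: matching_on_set2; rewrite ?cards2_ltn ?cross_set2 ?disjoint_set2_ltn //; lia.
Qed.

Lemma matching_on_quad_nested : matching_on (quad a b c d) [set [set a; d]; [set b; c]].
Proof.
rewrite -quad_nested.
by apply: matching_on_set2; rewrite ?cards2_ltn ?cross_set2 ?disjoint_set2_ltn //; lia.
Qed.

Lemma disj_compat_quad :
  disj_compat [set [set a; b]; [set c; d]] [set [set a; d]; [set b; c]].
Proof.
apply/andP; split.
  apply/pred0P=> e /=; apply/negP=> /andP[/set2P[]-> /set2P[] /set2_ltn_inj]; lia.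
apply/forall_inP=> e /set2P[]->; apply/forall_inP=> f /set2P[]->; rewrite cross_set2; lia.
Qed.

End Quad.

Section Blocks.
Variable k : nat.
Implicit Types (S : {set point k}) (M : matching_set k) (a b c d p q u w x y z : point k).

Definition block S M a b c d : Prop :=
  [/\ a < b, b < c, c < d,
      {in S, forall x, a <= x <= d -> x \in quad a b c d} &
      [set [set a; b]; [set c; d]] \subset M \/ [set [set a; d]; [set b; c]] \subset M].

Lemma block_pairings S M a b c d : block S M a b c d ->
  exists E N : matching_set k, [/\ E \subset M, matching_on (quad a b c d) E,
                  matching_on (quad a b c d) N & disj_compat E N].
Proof.
case=> ltab ltbc ltcd _ [sEM|sEM].
  exists [set [set a; b]; [set c; d]], [set [set a; d]; [set b; c]].
  by split; [|exact: matching_on_quad_adjacent|exact: matching_on_quad_nested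
              |exact: disj_compat_quad].
exists [set [set a; d]; [set b; c]], [set [set a; b]; [set c; d]].
by rewrite disj_compatC; split; [|exact: matching_on_quad_nested
  |exact: matching_on_quad_adjacent|exact: disj_compat_quad].
Qed.

Lemma block_card S M a b c d :
  matching_on S M -> block S M a b c d -> #|S :\: quad a b c d| = #|S| - 4.
Proof.
move=> hM blk; have [E [_ [sEM hE _ _]]] := block_pairings blk.
case: blk => ltab ltbc ltcd _ _.
by rewrite cardsD (setIidPr (matching_on_subset hM hE sEM)) card_quad.
Qed.

Lemma block_step S M a b c d : matching_on S M -> block S M a b c d ->
  (forall M0, matching_on (S :\: quad a b c d) M0 ->
     exists M0', matching_on (S :\: quad a b c d) M0' /\ disj_compat M0 M0') ->
  exists M', matching_on S M' /\ disj_compat M M'.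
Proof.
move=> hM blk IH; have [E [N [sEM hE hN dEN]]] := block_pairings blk.
case: blk => ltab ltbc ltcd covS _; set Q := quad a b c d in covS hE hN IH *.
have inQ : {in Q, forall x : point k, a <= x <= d}.
  by move=> x; rewrite !inE => /orP[]/orP[]/eqP->; lia.
have outR : {in S :\: Q, forall x : point k, ~~ (a <= x <= d)}.
  by move=> x /setDP[xS]; apply: contra; apply: covS.
have hM0 := matching_onD hM hE sEM; have [M0' [hM0' dM0]] := IH _ hM0.
exists (N :|: M0'); split.
  rewrite -(setID S Q) (setIidPr (matching_on_subset hM hE sEM)).
  exact: (matching_on_glue inQ outR hN hM0').
rewrite -(setID M E) (setIidPr sEM).
exact: (disj_compat_glue inQ outR hE hN hM0 hM0' dEN dM0).
Qed.

Section BlockExists.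
Variables (S : {set point k}) (M : matching_set k).
Hypothesis hM : matching_on S M.

Definition closed_in (lo hi : nat) :=
  forall x y, [set x; y] \in M -> lo <= x < hi -> lo <= y < hi.

Lemma closed_in_inside x y : [set x; y] \in M -> x < y -> closed_in x.+1 y.
Proof.
move=> xyM ltxy p q pqM /andP[xp py].
have yxM : [set y; x] \in M by rewrite setUC.
case: (boolP (x <= q <= y)) => [|out].
  by have := matching_on_mate hM xyM pqM; have := matching_on_mate hM yxM pqM; lia.
by case: hM => _ _ /(_ _ _ xyM pqM); rewrite cross_set2_in_out //; lia.
Qed.

Lemma closed_in_after lo hi x y : closed_in lo hi -> [set x; y] \in M -> lo <= x -> x < y ->
  {in S, forall u, lo <= u < hi -> x <= u} -> {in S, forall u, ~~ (x < u < y)} ->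
  closed_in y.+1 hi.
Proof.
move=> closed xyM lox ltxy xmin gap p q pqM /andP[yp phi].
have yxM : [set y; x] \in M by rewrite setUC.
have qS : q \in S by apply: (subsetP (matching_on_sub hM pqM)); rewrite set22.
have /andP[loq qhi] : lo <= q < hi by apply: (closed p); rewrite // phi andbT; lia.
have := xmin q qS (introT andP (conj loq qhi)); have := gap q qS.
by have := matching_on_mate hM xyM pqM; have := matching_on_mate hM yxM pqM; lia.
Qed.

Lemma nested_block x y p q : [set x; y] \in M -> [set p; q] \in M ->
  x < p -> p < q -> q < y ->
  {in S, forall u, x < u < y -> u = p :> nat \/ u = q :> nat} -> block S M x p q y.
Proof.
move=> xyM pqM xp pq qy cov; split=> // [u uS xuy|].
  by rewrite !inE -!val_eqE /=; have := cov u uS; lia.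
by right; apply/subsetP=> e /set2P[]->.
Qed.

Lemma adjacent_block x y z w : [set x; y] \in M -> [set z; w] \in M ->
  x < y -> y < z -> z < w -> {in S, forall u, ~~ (x < u < y)} ->
  {in S, forall u, y < u <= w -> u = z :> nat \/ u = w :> nat} -> block S M x y z w.
Proof.
move=> xyM zwM xy yz zw gap cov; split=> // [u uS xuw|].
  by rewrite !inE -!val_eqE /=; have := cov u uS; have := gap u uS; lia.
by left; apply/subsetP=> e /set2P[]->.
Qed.

Lemma block_or_edge n lo hi : hi - lo <= n -> closed_in lo hi ->
  (exists x0, (x0 \in S) && (lo <= x0 < hi)) ->
  (exists a b c d, block S M a b c d) \/
  exists x y, [/\ [set x; y] \in M, lo <= x, x < y, y < hi &
    {in S, forall u, lo <= u < hi -> u = x :> nat \/ u = y :> nat}].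
Proof.
elim: n lo hi => [|n IH] lo hi len closed [x0 inx0].
  by case/and3P: inx0 => _ lox0 x0hi; lia.
pose inP := [pred u : point k | (u \in S) && (lo <= u < hi)].
have [x /andP[xS /andP[lox xhi]] xmin] := @arg_minnP _ x0 inP val inx0.
have [y [neq_xy xyM]] := matching_on_partner hM xS.
have /andP[loy yhi] := closed x y xyM (introT andP (conj lox xhi)).
have yS : y \in S by apply: (subsetP (matching_on_sub hM xyM)); rewrite set22.
have ltxy : x < y.
  by have := xmin y; rewrite inE yS loy yhi -val_eqE /= in neq_xy * => /(_ isT); lia.
case: (pickP [pred u | (u \in S) && (x < u < y)]) => [p /andP[pS xpy]|gap].
  have [|||[p' [q' [pqM xp pq qy cov]]]] := IH x.+1 y _ (closed_in_inside xyM ltxy) _.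
  - by lia.
  - by exists p; rewrite pS.
  - by left.
  by left; exists x, p', q', y; apply: nested_block.
have {}gap : {in S, forall u, ~~ (x < u < y)}.
  by move=> u uS; have := gap u; rewrite /= uS /= => ->.
have {}xmin : {in S, forall u, lo <= u < hi -> x <= u}.
  by move=> u uS hu; apply: xmin; rewrite inE uS.
case: (pickP [pred u | (u \in S) && (y < u < hi)]) => [z /andP[zS yzh]|after].
  have closed_after := closed_in_after closed xyM lox ltxy xmin gap.
  have [|||[z' [w [zwM yz zw whi cov]]]] := IH y.+1 hi _ closed_after _.
  - by lia.
  - by exists z; rewrite zS.
  - by left.
  left; exists x, y, z', w; apply: adjacent_block => // u uS yuw.
  by apply: cov => //; lia.
right; exists x, y; split=> // u uS hu.
by have := xmin u uS hu; have := gap u uS; have := after u; rewrite /= uS; lia.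
Qed.

Lemma block_exists : 4 <= #|S| -> exists a b c d, block S M a b c d.
Proof.
move=> card4; have [x0 x0S] : exists x0, x0 \in S.
  by apply/set0Pn; rewrite -card_gt0; apply: leq_trans card4.
have [|||[x [y [_ _ _ _ cov]]]] := @block_or_edge (2 * k) 0 (2 * k) (leq_subr _ _) _ _.
- by move=> x y _ _; rewrite ltn_ord.
- by exists x0; rewrite x0S ltn_ord.
- by [].
have : S \subset [set x; y].
  by apply/subsetP=> u uS; rewrite !inE -!val_eqE /=; have := cov u uS; rewrite ltn_ord; lia.
by move/subset_leq_card; rewrite cards2; lia.
Qed.

End BlockExists.

End Blocks.

Lemma matching_on_disj_compat k m (S : {set point k}) (M : matching_set k) :
  #|S| = 4 * m -> matching_on S M -> exists M', matching_on S M' /\ disj_compat M M'.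
Proof.
elim: m S M => [|m IH] S M cardS hM.
  have -> : S = set0 by apply: cards0_eq; rewrite cardS.
  by exists set0; split; [exact: matching_on0 | exact: disj_compat0].
have [|a [b [c [d blk]]]] := block_exists hM; first by rewrite cardS; lia.
apply: (block_step hM blk) => M0; apply: IH.
by rewrite (block_card hM blk) cardS; lia.
Qed.

Theorem mainTheorem10 (k : nat) (hk : 1 <= k) (hev : ~~ odd k)
  (M : matching_set k) (hM : is_matching M) :
  exists M' : matching_set k, DCM_adj M M'.
Proof.
have cardX : #|[set: point k]| = 4 * k./2.
  by rewrite cardsT card_ord -{1}(odd_double_half k) (negbTE hev) -mul2n; lia.
move/is_matchingP: (hM) => hMX.
have [M' [/is_matchingP hM' dMM']] := matching_on_disj_compat cardX hMX.
by exists M'; apply/and3P.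
Qed.
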